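(* Consider a systematic $(\bar n,\bar k,\bar m)$ Strongly-MDS convolutional code, and suppose the sub-symbols of $\mathbf{x}[i]=(s_0[i],\dots,s_{\bar k-1}[i],p_0[i],\dots,p_{\bar n-\bar k-1}[i])$ are transmitted one per channel use, in this order, in the time interval $[i\bar n,(i+1)\bar n-1]$, for $i=0,1,\dots$. Then for each $j=0,1,\dots,\bar m$: (L1) if at most $\hat N\le(\bar n-\bar k)(j+1)$ transmitted sub-symbols are erased in the interval $[0,(j+1)\bar n-1]$, then $\mathbf{s}[0]=(s_0[0],\dots,s_{\bar k-1}[0])$ can be recovered by time $(j+1)\bar n-1$; (L2) if the channel introduces an erasure burst of $\hat B$ sub-symbols in the interval $[c,c+\hat B-1]$ with $\hat B\le(\bar n-\bar k)(j+1)$ and $0\le c\le\bar k-1$, then all erased source symbols are recovered by time $(j+1)\bar n-1$; (L3) if the channel introduces an erasure burst of $\hat B$ sub-symbols in the interval $[c,c+\hat B-1]$ with $0\le c\le\bar k-1$, followed by at most $\hat I$ isolated erasures, with $\hat B+\hat I\le(\bar n-\bar k)(j+1)$, then all erased symbols in the burst are recovered by time $(j+1)\bar n-1$.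
   Context: An $(\bar n,\bar k,\bar m)$ convolutional code over $\mathbb{F}_q$ maps source symbols $\mathbf{s}[i]\in\mathbb{F}_q^{\bar k}$ ($i\ge0$; $\mathbf{s}[i]=0$ for $i<0$) to $\mathbf{x}[i]=\big(\sum_{t=0}^{\bar m}\mathbf{s}^\dagger[i-t]\mathbf{G}_t\big)^\dagger\in\mathbb{F}_q^{\bar n}$ with $\mathbf{G}_t\in\mathbb{F}_q^{\bar k\times\bar n}$. It is systematic if $\mathbf{G}_0=[\mathbf{I}_{\bar k}\ \mathbf{H}_0]$ and $\mathbf{G}_t=[\mathbf{0}_{\bar k\times\bar k}\ \mathbf{H}_t]$ for $t\ge1$, so $\mathbf{x}[i]=(\mathbf{s}[i],\mathbf{p}[i])$ with $\mathbf{p}[i]=(\sum_{t=0}^{\bar m}\mathbf{s}^\dagger[i-t]\mathbf{H}_t)^\dagger\in\mathbb{F}_q^{\bar n-\bar k}$. Its $j$-th sub-symbol column distance is $d_j^c=\min\{\mathrm{wt}^c(\mathbf{x}[0],\dots,\mathbf{x}[j]) : \mathbf{s}[0]\neq0\}$, where $\mathrm{wt}^c$ counts nonzero entries (sub-symbols) in $\mathbb{F}_q$. A systematic Strongly-MDS code is a systematic $(\bar n,\bar k,\bar m)$ convolutional code with $d_j^c=(\bar n-\bar k)(j+1)+1$ for all $j=0,1,\dots,\bar m$. *)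

From HB Require Import structures.
From mathcomp Require Import all_boot all_order all_algebra all_field.
Set Implicit Arguments. Unset Strict Implicit. Unset Printing Implicit Defensive.
Import GRing.Theory.
Local Open Scope ring_scope.

(* Source sequence s : nat -> 'rV_k (s[i] = 0 for i < 0 is built in by
   using nat indices and only summing over t <= i). *)

Section Code.
Variables (F : finFieldType) (n k m : nat).
Variable H : 'I_m.+1 -> 'M[F]_(k, n - k).

Definition parity (s : nat -> 'rV[F]_k) (i : nat) : 'rV[F]_(n - k) :=
  \sum_(t < m.+1 | (t <= i)%N) s (i - t)%N *m H t.

Definition codeword (s : nat -> 'rV[F]_k) (i : nat) : 'rV[F]_(k + (n - k)) :=
  row_mx (s i) (parity s i).

(* the sub-symbol transmitted at channel use t: the (t mod n)-th entry of
   x[t / n]  (when k <= n, k + (n - k) = n so the else-branch never occurs) *)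
Definition sym (s : nat -> 'rV[F]_k) (t : nat) : F :=
  match ltnP (t %% n) (k + (n - k)) with
  | LtnNotGeq h => codeword s (t %/ n) 0 (Ordinal h)
  | _ => 0
  end.

Definition wtc (s : nat -> 'rV[F]_k) (j : nat) : nat :=
  count (fun t => sym s t != 0) (iota 0 (j.+1 * n)).

Definition is_col_dist (j d : nat) : Prop :=
  (forall s : nat -> 'rV[F]_k, s 0%N != 0 -> (d <= wtc s j)%N) /\
  (exists s : nat -> 'rV[F]_k, s 0%N != 0 /\ wtc s j = d).

Definition strongly_MDS : Prop :=
  forall j, (j <= m)%N -> is_col_dist j ((n - k) * j.+1 + 1)%N.

Definition agree_before (E : pred nat) (T : nat) (s s' : nat -> 'rV[F]_k) :=
  forall t, (t < T)%N -> ~~ E t -> sym s t = sym s' t.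

End Code.

From HB Require Import structures.
From mathcomp Require Import all_boot all_order all_algebra all_field.
From mathcomp Require Import zify.
Set Implicit Arguments. Unset Strict Implicit. Unset Printing Implicit Defensive.
Import GRing.Theory.
Local Open Scope ring_scope.

(* The received sub-symbols depend linearly on the source, so two source
   sequences agreeing at every non-erased position differ by a sequence [d]
   whose sub-symbols vanish outside the erasures.  If [d] vanishes before
   block [i], its shift by [i] blocks is again a source sequence whose weight
   on blocks [0..j-i] is at most the number of erasures in blocks [i..j]; when
   that number is at most [(n-k)(j-i+1)], the column distance
   [d^c_(j-i) = (n-k)(j-i+1)+1] forces [d i = 0].  (L1) is the case [i = 0].
   For a burst starting at [c < k] we induct on the blocks met by the burst:
   blocks [i..j] contain at most [c + B + I - i n] erasures, which is at most
   [(n-k)(j-i+1)] because [c < k <= k i] for [i >= 1]. *)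

Lemma sub_in_count (T : eqType) (a b : pred T) (s : seq T) :
  {in s, forall x, a x -> b x} -> (count a s <= count b s)%N.
Proof.
elim: s => //= x s IH ab; rewrite leq_add //.
  by case ax: (a x) => //=; rewrite (ab x (mem_head _ _) ax).
by apply: IH => y ys; apply: ab; rewrite in_cons ys orbT.
Qed.

Lemma count_itv_iota c B a L :
  (count (fun t => c <= t < c + B)%N (iota a L) <= c + B - maxn a c)%N.
Proof.
elim: L a => [|L IH] a //=.
move: (IH a.+1); case: (leqP c a) => h1; case: (ltnP a (c + B)) => h2 /= IHa; lia.
Qed.

Lemma count_mem_iota (s : seq nat) a L :
  (count (mem s) (iota a L) <= size s)%N.
Proof.
rewrite -size_filter; apply: uniq_leq_size; first exact/filter_uniq/iota_uniq.
by move=> x; rewrite mem_filter => /andP[].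
Qed.

Section Linearity.
Variables (F : finFieldType) (n k m : nat).
Variable H : 'I_m.+1 -> 'M[F]_(k, n - k).

Lemma symE s t (ht : (t %% n < k + (n - k))%N) :
  sym H s t = codeword H s (t %/ n) 0 (Ordinal ht).
Proof.
rewrite /sym; case: ltnP => [ht'|]; first by congr (codeword _ _ _ _ _); apply: val_inj.
by rewrite leqNgt ht.
Qed.

Lemma sym_out s t : (k + (n - k) <= t %% n)%N -> sym H s t = 0.
Proof. by rewrite /sym; case: ltnP => // ht; rewrite leqNgt ht. Qed.

Lemma sym_codeword s1 s2 t1 t2 : (t1 %% n = t2 %% n)%N ->
  codeword H s1 (t1 %/ n) = codeword H s2 (t2 %/ n) -> sym H s1 t1 = sym H s2 t2.
Proof.
move=> eq_mod eq_cw; case: (ltnP (t1 %% n) (k + (n - k))) => ht1.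
  have ht2 := ht1; rewrite eq_mod in ht2.
  by rewrite (symE _ ht1) (symE _ ht2) eq_cw; congr (_ 0 _); apply: val_inj.
by rewrite !sym_out // -eq_mod.
Qed.

Lemma codewordB s s' i :
  codeword H (fun l => s l - s' l) i = codeword H s i - codeword H s' i.
Proof.
rewrite /codeword opp_row_mx add_row_mx /parity -sumrB.
by congr row_mx; apply: eq_bigr => t _; rewrite mulmxBl.
Qed.

Lemma symB s s' t : sym H (fun l => s l - s' l) t = sym H s t - sym H s' t.
Proof.
case: (ltnP (t %% n) (k + (n - k))) => ht; first by rewrite !(symE _ ht) codewordB !mxE.
by rewrite !sym_out ?subr0.
Qed.

Lemma codeword_shift d i l : (forall l, (l < i)%N -> d l = 0) ->
  codeword H (fun l => d (l + i)%N) l = codeword H d (l + i)%N.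
Proof.
move=> d_lt_i; rewrite /codeword; congr row_mx.
rewrite /parity [RHS](bigID (fun t : 'I_m.+1 => (t <= l)%N)) /=.
rewrite [X in _ = _ + X]big1 ?addr0 => [|t /andP[t_le]]; last first.
  by rewrite -ltnNge => lt_t; rewrite d_lt_i ?mul0mx //; lia.
apply: eq_big => [t|t tl]; last by congr (d _ *m _); lia.
by case: (leqP t l) => tl /=; [rewrite andbT (leq_trans tl (leq_addr _ _)) | rewrite andbF].
Qed.

Lemma sym_eq0 d t : (forall l, (l <= t %/ n)%N -> d l = 0) -> sym H d t = 0.
Proof.
move=> d0; case: (ltnP (t %% n) (k + (n - k))) => ht; last exact: sym_out.
rewrite (symE _ ht) (_ : codeword H d _ = 0) ?mxE //.
rewrite /codeword d0 // /parity big1 ?row_mx0 // => i _.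
by rewrite d0 ?mul0mx // leq_subr.
Qed.

Lemma wtc_shift d i j : (0 < n)%N -> (forall l, (l < i)%N -> d l = 0) ->
  wtc H (fun l => d (l + i)%N) j =
  count (fun t => sym H d t != 0) (iota (i * n) (j.+1 * n))%N.
Proof.
move=> n_gt0 d_lt_i; rewrite /wtc -(addn0 (i * n)%N) iotaDl count_map.
apply: eq_count => t /=; congr (_ != _); apply: sym_codeword; first by rewrite modnMDl.
by rewrite codeword_shift // divnMDl // [(i + _)%N]addnC.
Qed.

Lemma count_sym_neq0_erased E T s s' a L : agree_before H E T s s' ->
  (a + L <= T)%N ->
  (count (fun t => sym H (fun l => s l - s' l)%R t != 0%R) (iota a L)
     <= count E (iota a L))%N.
Proof.
move=> agree aLT; apply: sub_in_count => t; rewrite mem_iota => /andP[_ tL].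
by apply: contraNT => Et; rewrite symB agree ?subrr //; lia.
Qed.

End Linearity.

Section StronglyMDS.
Variables (F : finFieldType) (n k m : nat).
Variable H : 'I_m.+1 -> 'M[F]_(k, n - k).
Hypothesis k_le_n : (k <= n)%N.
Hypothesis MDS : strongly_MDS H.

Lemma strongly_MDS_block_eq0 j i d : (0 < n)%N -> (i <= j <= m)%N ->
  (forall l, (l < i)%N -> d l = 0) ->
  (count (fun t => sym H d t != 0%R) (iota (i * n) ((j - i).+1 * n))
     <= (n - k) * (j - i).+1)%N -> d i = 0.
Proof.
move=> n_gt0 /andP[ij jm] d_lt_i wt_le; apply/eqP; apply: contraTT wt_le => di_neq0.
have [dist_le _] := MDS (leq_trans (leq_subr i j) jm).
have := dist_le (fun l => d (l + i)%N); rewrite add0n wtc_shift // => /(_ di_neq0).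
by rewrite -ltnNge addn1.
Qed.

Lemma burst_block_le j c B i : (c < k)%N -> (B <= (n - k) * j.+1)%N ->
  (i * n < c + B)%N -> (i <= j)%N.
Proof.
move=> ck Bj iB; rewrite -ltnS -(@ltn_pmul2r n); last by lia.
have -> : (j.+1 * n = (n - k) * j.+1 + k * j.+1)%N by rewrite -mulnDl subnK // mulnC.
by have : (k <= k * j.+1)%N := leq_pmulr k (ltn0Sn j); lia.
Qed.

Lemma count_burst_window j c B I (Iso : seq nat) i :
  (c < k)%N -> (size Iso <= I)%N -> (B + I <= (n - k) * j.+1)%N ->
  (i * n < c + B)%N ->
  (count (predU (fun t => c <= t < c + B) (mem Iso)) (iota (i * n) ((j - i).+1 * n))
     <= (n - k) * (j - i).+1)%N.
Proof.
move=> ck IsoI BIj iB; have ij := burst_block_le ck (leq_trans (leq_addr I B) BIj) iB.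
set w := iota _ _; rewrite -(leq_add2r (count (predI (fun t => c <= t < c + B)%N (mem Iso)) w)).
rewrite count_predUI; apply: leq_trans (leq_addr _ _).
apply: leq_trans (leq_add (count_itv_iota _ _ _ _) (count_mem_iota _ _ _)) _.
case: i iB ij {w} => [|i] iB ij; first by rewrite mul0n max0n subn0 addKn; lia.
have : ((n - k) * j.+1 = (n - k) * (j - i.+1).+1 + (n - k) * i.+1)%N.
  by rewrite -mulnDr; congr (_ * _)%N; lia.
have : (i.+1 * n = (n - k) * i.+1 + k * i.+1)%N by rewrite -mulnDl subnK // mulnC.
have : (k <= k * i.+1)%N := leq_pmulr k (ltn0Sn i).
have : (n <= i.+1 * n)%N := leq_pmull n (ltn0Sn i).
lia.
Qed.

Lemma first_source_recovered j : (j <= m)%N -> forall E N,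
  (count E (iota 0 (j.+1 * n)) <= N)%N -> (N <= (n - k) * j.+1)%N ->
  forall s s', agree_before H E (j.+1 * n) s s' -> s 0%N = s' 0%N.
Proof.
move=> jm E N EN Nj s s' agree; case: (posnP k) => [k0|k_gt0].
  by apply/rowP => -[y y_lt]; exfalso; rewrite k0 in y_lt.
apply/eqP; rewrite -subr_eq0; apply/eqP.
apply: (@strongly_MDS_block_eq0 j 0 (fun l => s l - s' l)); rewrite ?jm //; first lia.
rewrite mul0n subn0; apply: leq_trans Nj; apply: leq_trans EN.
exact: count_sym_neq0_erased agree _.
Qed.

Lemma burst_recovered j E c B I (Iso : seq nat) : (j <= m)%N ->
  (c < k)%N -> (size Iso <= I)%N -> (B + I <= (n - k) * j.+1)%N ->
  {subset E <= predU (fun t => c <= t < c + B)%N (mem Iso)} ->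
  forall s s', agree_before H E (j.+1 * n) s s' ->
  forall t, (c <= t < c + B)%N -> sym H s t = sym H s' t.
Proof.
move=> jm ck IsoI BIj EIso s s' agree t /andP[_ tB]; set d := fun l => s l - s' l.
have n_gt0 : (0 < n)%N by lia.
have d_eq0 i : (i * n < c + B)%N -> d i = 0.
  elim/ltn_ind: i => i IH iB; have ij := burst_block_le ck (leq_trans (leq_addr I B) BIj) iB.
  apply: (strongly_MDS_block_eq0 n_gt0 (_ : i <= j <= m)%N); first by rewrite ij.
    by move=> l li; apply: IH => //; apply: leq_ltn_trans iB; rewrite leq_mul2r ltnW ?orbT.
  apply: leq_trans (count_burst_window ck IsoI BIj iB).
  apply: leq_trans (count_sym_neq0_erased agree _) (sub_count EIso _).
  by rewrite -mulnDl leq_mul2r; apply/orP; right; lia.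
apply/eqP; rewrite -subr_eq0 -symB; apply/eqP; apply: sym_eq0 => l lt.
apply: d_eq0; apply: leq_ltn_trans tB; apply: leq_trans (leq_divM t n).
by rewrite leq_mul2r lt orbT.
Qed.

End StronglyMDS.

Theorem lemma1 (F : finFieldType) (n k m : nat)
    (H : 'I_m.+1 -> 'M[F]_(k, n - k)) :
  (k <= n)%N -> strongly_MDS H ->
  forall j : nat, (j <= m)%N ->
  (* (L1) *)
  (forall (E : pred nat) (N : nat),
     (count E (iota 0 (j.+1 * n)) <= N)%N -> (N <= (n - k) * j.+1)%N ->
     forall s s' : nat -> 'rV[F]_k,
       agree_before H E (j.+1 * n) s s' -> s 0%N = s' 0%N) /\
  (* (L2) *)
  (forall c B : nat,
     (c < k)%N -> (B <= (n - k) * j.+1)%N ->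
     forall s s' : nat -> 'rV[F]_k,
       agree_before H (fun t => (c <= t < c + B)%N) (j.+1 * n) s s' ->
       forall t, (c <= t < c + B)%N -> (t %% n < k)%N ->
         sym H s t = sym H s' t) /\
  (* (L3) *)
  (forall (c B I : nat) (Iso : seq nat),
     (c < k)%N ->
     (size Iso <= I)%N ->
     all (fun t => c + B < t)%N Iso ->
     (forall t, t \in Iso -> t.+1 \notin Iso) ->
     (B + I <= (n - k) * j.+1)%N ->
     forall s s' : nat -> 'rV[F]_k,
       agree_before H (fun t => (c <= t < c + B)%N || (t \in Iso)) (j.+1 * n) s s' ->
       forall t, (c <= t < c + B)%N -> sym H s t = sym H s' t).
Proof.
move=> kn MDS j jm; split; [|split].
- exact: (first_source_recovered kn MDS jm).
- move=> c B ck Bj s s' agree t tB _.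
  apply: (burst_recovered kn MDS jm ck (_ : size [::] <= 0)%N) agree t tB => //.
    by rewrite addn0.
  by move=> t' Bt'; apply/orP; left.
- move=> c B I Iso ck IsoI _ _ BIj s s' agree.
  have E_sub : {subset (fun t => (c <= t < c + B)%N || (t \in Iso))
                <= predU (fun t => c <= t < c + B)%N (mem Iso)} by [].
  exact: (burst_recovered kn MDS jm ck IsoI BIj E_sub agree).
Qed.
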